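(* (1) Let $M$ be a $\mathtt{dCBN}$ term. If $M^n\to N$ in $\mathtt{dBang}$, then there is a $\mathtt{dCBN}$ term $P$ such that $M\to_n^* P$ and $N\to^* P^n$. (2) Let $M$ be a $\mathtt{dCBV}$ term. If $M^v\to N$ in $\mathtt{dBang}$, then there is a $\mathtt{dCBV}$ term $P$ such that $M\to_v^* P$ and $N\to^* P^v$.
   Context: \textbf{dBang.} Terms: $M,N ::= x \mid \lambda x.M \mid MN \mid M[N/x] \mid\ !M \mid \mathrm{der}\,M$ ($M[N/x]$ explicit substitution binding $x$); $M\{N/x\}$ capture-avoiding substitution. List contexts $L ::= \square\mid L[N/x]$. Root rules: $L\langle\lambda x.M\rangle N \mapsto L\langle M[N/x]\rangle$; $M[L\langle !N\rangle/x]\mapsto L\langle M\{N/x\}\rangle$; $\mathrm{der}(L\langle !N\rangle)\mapsto L\langle N\rangle$; $\to$ is their closure under all contexts. \textbf{dCBN, dCBV.} Common syntax $M,N::=x\mid\lambda x.M\mid MN\mid M[N/x]$; values $V::=x\mid\lambda x.M$; list contexts $L::=\square\mid L[N/x]$. $\to_n$ is the closure under all contexts of $L\langle\lambda x.M\rangle N\mapsto L\langle M[N/x]\rangle$ and $M[N/x]\mapsto M\{N/x\}$. $\to_v$ is the closure under all contexts of $L\langle\lambda x.M\rangle N\mapsto L\langle M[N/x]\rangle$ and $M[L\langle V\rangle/x]\mapsto L\langle M\{V/x\}\rangle$ for $V$ a value. \textbf{Translations.} $x^n=x$, $(\lambda x.M)^n=\lambda x.M^n$, $(MN)^n=M^n\,!N^n$,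 $(M[N/x])^n=M^n[!N^n/x]$. $x^v=!x$, $(\lambda x.M)^v=!(\lambda x.M^v)$, $(MN)^v=L\langle P\rangle N^v$ if $M^v=L\langle !P\rangle$ for a list context $L$, and $(MN)^v=\mathrm{der}(M^v)\,N^v$ otherwise; $(M[N/x])^v=M^v[N^v/x]$. *)

(* Terms are represented with de Bruijn indices (terms up to
   alpha-equivalence); capture-avoiding substitution is de Bruijn substitution. *)
From Stdlib Require Import Arith List Relations.
Import ListNotations.

(* BEs M N  represents  M[N/x]  : the binder x (index 0) scopes over M only. *)
Inductive bterm : Type :=
| BVar : nat -> bterm
| BLam : bterm -> bterm
| BApp : bterm -> bterm -> bterm
| BEs  : bterm -> bterm -> bterm
| BBang : bterm -> bterm
| BDer : bterm -> bterm.

Fixpoint liftB (c k : nat) (t : bterm) : bterm :=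
  match t with
  | BVar n => if n <? c then BVar n else BVar (n + k)
  | BLam M => BLam (liftB (S c) k M)
  | BApp M N => BApp (liftB c k M) (liftB c k N)
  | BEs M N => BEs (liftB (S c) k M) (liftB c k N)
  | BBang M => BBang (liftB c k M)
  | BDer M => BDer (liftB c k M)
  end.

(* substB j u t : replace index j by u in t (capture-avoiding), decrementing
   indices above j.  M{N/x} with x = index 0 is substB 0 N M. *)
Fixpoint substB (j : nat) (u : bterm) (t : bterm) : bterm :=
  match t with
  | BVar n => if n <? j then BVar n
              else if n =? j then liftB 0 j u
              else BVar (n - 1)
  | BLam M => BLam (substB (S j) u M)
  | BApp M N => BApp (substB j u M) (substB j u N)
  | BEs M N => BEs (substB (S j) u M) (substB j u N)
  | BBang M => BBang (substB j u M)
  | BDer M => BDer (substB j u M)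
  end.

(* List contexts L ::= [] | L[N/x], represented as the list of the N's,
   innermost first: plugB [N1; ...; Nk] M = M[N1/x1]...[Nk/xk]. *)
Fixpoint plugB (L : list bterm) (M : bterm) : bterm :=
  match L with
  | [] => M
  | N :: L' => plugB L' (BEs M N)
  end.

(* Root rules (the Barendregt convention of the paper is implemented by
   shifting the term moved under the binders of L). *)
Inductive rootB : bterm -> bterm -> Prop :=
| rootB_dB : forall L M N,
    rootB (BApp (plugB L (BLam M)) N) (plugB L (BEs M (liftB 0 (length L) N)))
| rootB_sbang : forall M L N,
    rootB (BEs M (plugB L (BBang N))) (plugB L (substB 0 N (liftB 1 (length L) M)))
| rootB_dbang : forall L N,
    rootB (BDer (plugB L (BBang N))) (plugB L N).

Inductive stepB : bterm -> bterm -> Prop :=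
| stepB_root : forall M N, rootB M N -> stepB M N
| stepB_lam : forall M M', stepB M M' -> stepB (BLam M) (BLam M')
| stepB_appl : forall M M' N, stepB M M' -> stepB (BApp M N) (BApp M' N)
| stepB_appr : forall M N N', stepB N N' -> stepB (BApp M N) (BApp M N')
| stepB_esl : forall M M' N, stepB M M' -> stepB (BEs M N) (BEs M' N)
| stepB_esr : forall M N N', stepB N N' -> stepB (BEs M N) (BEs M N')
| stepB_bang : forall M M', stepB M M' -> stepB (BBang M) (BBang M')
| stepB_der : forall M M', stepB M M' -> stepB (BDer M) (BDer M').

Inductive lterm : Type :=
| LVar : nat -> lterm
| LLam : lterm -> lterm
| LApp : lterm -> lterm -> lterm
| LEs  : lterm -> lterm -> lterm.

Fixpoint liftL (c k : nat) (t : lterm) : lterm :=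
  match t with
  | LVar n => if n <? c then LVar n else LVar (n + k)
  | LLam M => LLam (liftL (S c) k M)
  | LApp M N => LApp (liftL c k M) (liftL c k N)
  | LEs M N => LEs (liftL (S c) k M) (liftL c k N)
  end.

Fixpoint substL (j : nat) (u : lterm) (t : lterm) : lterm :=
  match t with
  | LVar n => if n <? j then LVar n
              else if n =? j then liftL 0 j u
              else LVar (n - 1)
  | LLam M => LLam (substL (S j) u M)
  | LApp M N => LApp (substL j u M) (substL j u N)
  | LEs M N => LEs (substL (S j) u M) (substL j u N)
  end.

Fixpoint plugL (L : list lterm) (M : lterm) : lterm :=
  match L with
  | [] => M
  | N :: L' => plugL L' (LEs M N)
  end.

Definition is_value (V : lterm) : Prop :=
  match V with LVar _ | LLam _ => True | _ => False end.

Inductive rootN : lterm -> lterm -> Prop :=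
| rootN_dB : forall L M N,
    rootN (LApp (plugL L (LLam M)) N) (plugL L (LEs M (liftL 0 (length L) N)))
| rootN_s : forall M N, rootN (LEs M N) (substL 0 N M).

Inductive rootV : lterm -> lterm -> Prop :=
| rootV_dB : forall L M N,
    rootV (LApp (plugL L (LLam M)) N) (plugL L (LEs M (liftL 0 (length L) N)))
| rootV_sv : forall M L V, is_value V ->
    rootV (LEs M (plugL L V)) (plugL L (substL 0 V (liftL 1 (length L) M))).

Inductive ctxL (r : lterm -> lterm -> Prop) : lterm -> lterm -> Prop :=
| ctxL_root : forall M N, r M N -> ctxL r M N
| ctxL_lam : forall M M', ctxL r M M' -> ctxL r (LLam M) (LLam M')
| ctxL_appl : forall M M' N, ctxL r M M' -> ctxL r (LApp M N) (LApp M' N)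
| ctxL_appr : forall M N N', ctxL r N N' -> ctxL r (LApp M N) (LApp M N')
| ctxL_esl : forall M M' N, ctxL r M M' -> ctxL r (LEs M N) (LEs M' N)
| ctxL_esr : forall M N N', ctxL r N N' -> ctxL r (LEs M N) (LEs M N').

Definition stepN := ctxL rootN.
Definition stepV := ctxL rootV.

Fixpoint transN (M : lterm) : bterm :=
  match M with
  | LVar n => BVar n
  | LLam M => BLam (transN M)
  | LApp M N => BApp (transN M) (BBang (transN N))
  | LEs M N => BEs (transN M) (BBang (transN N))
  end.

(* unbang T = Some (L<P>) if T = L<!P> for a list context L, None otherwise *)
Fixpoint unbang (T : bterm) : option bterm :=
  match T with
  | BBang P => Some P
  | BEs M N => match unbang M with Some M' => Some (BEs M' N) | None => None end
  | _ => None
  end.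

Fixpoint transV (M : lterm) : bterm :=
  match M with
  | LVar n => BBang (BVar n)
  | LLam M => BBang (BLam (transV M))
  | LApp M N =>
      match unbang (transV M) with
      | Some Q => BApp Q (transV N)
      | None => BApp (BDer (transV M)) (transV N)
      end
  | LEs M N => BEs (transV M) (transV N)
  end.

Definition stepsB := clos_refl_trans bterm stepB.
Definition stepsN := clos_refl_trans lterm stepN.
Definition stepsV := clos_refl_trans lterm stepV.

(* Both translations commute with lifting, substitution and list contexts, so a
   root step of dBang on a translated term is the translation of a root step of
   the source calculus; for dCBV this uses that L<!W> = U^v forces U = L'<V> with
   V a value and W = V^v without its bang.  The one subtle case is a dCBV application M N, whose
   translation depends on whether M^v has the shape L<!P>.  A step inside M^v
   preserves that shape, but may also create it; then the reduct still carries
   the dereliction der(L<!P>), and one more step der(L<!P>) -> L<P> realigns it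
   with the translation.  This is why dCBV needs multi-steps on both sides. *)

From Stdlib Require Import Arith List Relations.
Import ListNotations.

Lemma clos_rt_map {A B : Type} (R : relation A) (S : relation B) (f : A -> B) :
  (forall x y, R x y -> S (f x) (f y)) ->
  forall x y, clos_refl_trans A R x y -> clos_refl_trans B S (f x) (f y).
Proof.
  intros Hf x y Hxy; induction Hxy as [x y Hxy| |x y z _ IHxy _ IHyz].
  - apply rt_step, Hf, Hxy.
  - apply rt_refl.
  - eapply rt_trans; eauto.
Qed.

Lemma stepsB_map (f : bterm -> bterm) :
  (forall x y, stepB x y -> stepB (f x) (f y)) ->
  forall x y, stepsB x y -> stepsB (f x) (f y).
Proof. apply clos_rt_map. Qed.

Lemma stepsV_map (f : lterm -> lterm) :
  (forall x y, stepV x y -> stepV (f x) (f y)) ->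
  forall x y, stepsV x y -> stepsV (f x) (f y).
Proof. apply clos_rt_map. Qed.

Lemma rootB_app_inv X Y Z : rootB (BApp X Y) Z ->
  exists L M, X = plugB L (BLam M) /\ Z = plugB L (BEs M (liftB 0 (length L) Y)).
Proof. intros H; inversion H; subst; eauto. Qed.

Lemma rootB_es_inv X Y Z : rootB (BEs X Y) Z ->
  exists L N, Y = plugB L (BBang N) /\ Z = plugB L (substB 0 N (liftB 1 (length L) X)).
Proof. intros H; inversion H; subst; eauto. Qed.

Lemma rootB_der_inv X Z : rootB (BDer X) Z ->
  exists L N, X = plugB L (BBang N) /\ Z = plugB L N.
Proof. intros H; inversion H; subst; eauto. Qed.

Lemma stepB_app_inv X Y Z : stepB (BApp X Y) Z ->
  rootB (BApp X Y) Z \/ (exists X', stepB X X' /\ Z = BApp X' Y)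
  \/ (exists Y', stepB Y Y' /\ Z = BApp X Y').
Proof. intros H; inversion H; subst; eauto 10. Qed.

Lemma stepB_es_inv X Y Z : stepB (BEs X Y) Z ->
  rootB (BEs X Y) Z \/ (exists X', stepB X X' /\ Z = BEs X' Y)
  \/ (exists Y', stepB Y Y' /\ Z = BEs X Y').
Proof. intros H; inversion H; subst; eauto 10. Qed.

Lemma stepB_der_inv X Z : stepB (BDer X) Z ->
  rootB (BDer X) Z \/ (exists X', stepB X X' /\ Z = BDer X').
Proof. intros H; inversion H; subst; eauto. Qed.

Lemma stepB_lam_inv X Z : stepB (BLam X) Z -> exists X', stepB X X' /\ Z = BLam X'.
Proof. intros H; inversion H as [? ? Hr| | | | | | |]; subst; eauto; inversion Hr. Qed.

Lemma stepB_bang_inv X Z : stepB (BBang X) Z -> exists X', stepB X X' /\ Z = BBang X'.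
Proof. intros H; inversion H as [? ? Hr| | | | | | |]; subst; eauto; inversion Hr. Qed.

Lemma stepB_var_inv n Z : ~ stepB (BVar n) Z.
Proof. intros H; inversion H as [? ? Hr| | | | | | |]; inversion Hr. Qed.

Lemma plugB_app L x M : plugB (L ++ [x]) M = BEs (plugB L M) x.
Proof. revert M; induction L; simpl; auto. Qed.

Lemma plugL_app L x M : plugL (L ++ [x]) M = LEs (plugL L M) x.
Proof. revert M; induction L; simpl; auto. Qed.

Lemma plugB_nil_or_es L M : L = [] \/ exists A B, plugB L M = BEs A B.
Proof.
  destruct L as [|x L _] using rev_ind; [now left|right].
  rewrite plugB_app; eauto.
Qed.

(** * Call-by-name *)

Lemma liftB_0 T : forall c, liftB c 0 T = T.
Proof.
  induction T; intros c; simpl; rewrite ?IHT, ?IHT1, ?IHT2, ?Nat.add_0_r; auto.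
  destruct (n <? c); auto.
Qed.

Lemma transN_lift M : forall c k, transN (liftL c k M) = liftB c k (transN M).
Proof.
  induction M; intros c k; simpl; rewrite ?IHM, ?IHM1, ?IHM2; auto.
  destruct (n <? c); auto.
Qed.

Lemma transN_subst M : forall j B, transN (substL j B M) = substB j (transN B) (transN M).
Proof.
  induction M; intros j B; simpl; rewrite ?IHM, ?IHM1, ?IHM2; auto.
  destruct (n <? j); auto. destruct (n =? j); simpl; auto using transN_lift.
Qed.

Lemma transN_plug L M :
  transN (plugL L M) = plugB (map (fun x => BBang (transN x)) L) (transN M).
Proof. revert M; induction L; simpl; auto. Qed.

Lemma transN_eq_plug_lam L : forall A M, transN A = plugB L (BLam M) ->
  exists L' A0, A = plugL L' (LLam A0) /\ L = map (fun x => BBang (transN x)) L'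
    /\ M = transN A0.
Proof.
  induction L as [|x L IH] using rev_ind; intros A M H; simpl in H.
  - destruct A; simpl in H; try discriminate. injection H as <-.
    exists [], A; auto.
  - rewrite plugB_app in H. destruct A as [| | |A1 A2]; simpl in H; try discriminate.
    injection H as H <-. destruct (IH _ _ H) as (L' & A0 & -> & -> & ->).
    exists (L' ++ [A2]), A0. rewrite plugL_app, map_app; auto.
Qed.

Lemma transN_root_reflect M N : rootB (transN M) N ->
  exists P, rootN M P /\ N = transN P.
Proof.
  destruct M as [| |M1 M2|M1 M2]; simpl; intros H; try solve [inversion H].
  - apply rootB_app_inv in H as (L & M' & HL & ->).
    apply transN_eq_plug_lam in HL as (L' & A0 & -> & -> & ->).
    exists (plugL L' (LEs A0 (liftL 0 (length L') M2))); split; [constructor|].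
    rewrite transN_plug; simpl. rewrite transN_lift, length_map; auto.
  - apply rootB_es_inv in H as (L & N0 & HL & ->).
    destruct (plugB_nil_or_es L (BBang N0)) as [->|(A & B & E)];
      [|rewrite E in HL; discriminate].
    injection HL as <-. exists (substL 0 M2 M1); split; [constructor|].
    simpl. rewrite liftB_0, transN_subst; auto.
Qed.

Lemma transN_step_reflect M : forall N, stepB (transN M) N ->
  exists P, stepN M P /\ N = transN P.
Proof.
  induction M as [n|M IH|M1 IH1 M2 IH2|M1 IH1 M2 IH2]; intros N H; simpl in H.
  - now apply stepB_var_inv in H.
  - apply stepB_lam_inv in H as (X & H & ->).
    destruct (IH _ H) as (P & HP & ->). exists (LLam P); split; [now constructor|auto].
  - apply stepB_app_inv in H as [H|[(X & H & ->)|(Y & H & ->)]].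
    + destruct (transN_root_reflect (LApp M1 M2) N H) as (P & HP & ->).
      exists P; split; [now constructor|auto].
    + destruct (IH1 _ H) as (P & HP & ->). exists (LApp P M2); split; [now constructor|auto].
    + apply stepB_bang_inv in H as (X & H & ->).
      destruct (IH2 _ H) as (P & HP & ->). exists (LApp M1 P); split; [now constructor|auto].
  - apply stepB_es_inv in H as [H|[(X & H & ->)|(Y & H & ->)]].
    + destruct (transN_root_reflect (LEs M1 M2) N H) as (P & HP & ->).
      exists P; split; [now constructor|auto].
    + destruct (IH1 _ H) as (P & HP & ->). exists (LEs P M2); split; [now constructor|auto].
    + apply stepB_bang_inv in H as (X & H & ->).
      destruct (IH2 _ H) as (P & HP & ->). exists (LEs M1 P); split; [now constructor|auto].
Qed.

(** * Call-by-value *)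

Lemma unbang_lift T : forall c k,
  unbang (liftB c k T) = option_map (liftB c k) (unbang T).
Proof.
  induction T as [n| | |T1 IH1 T2 _| |]; intros c k; simpl; auto.
  - destruct (n <? c); auto.
  - rewrite IH1. destruct (unbang T1); auto.
Qed.

Lemma unbang_subst T : forall j u Q, unbang T = Some Q ->
  unbang (substB j u T) = Some (substB j u Q).
Proof.
  induction T as [| | |T1 IH1 T2 _| |]; intros j u Q H; simpl in H; try discriminate.
  - destruct (unbang T1) as [Q1|] eqn:E; try discriminate. injection H as <-.
    simpl. rewrite (IH1 (S j) u Q1 eq_refl); auto.
  - injection H as <-; auto.
Qed.

Lemma unbang_plug L : forall T, unbang (plugB L T) = option_map (plugB L) (unbang T).
Proof.
  induction L; intros T; simpl; [destruct (unbang T); auto|].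
  rewrite IHL; simpl. destruct (unbang T); auto.
Qed.

Lemma unbang_Some_inv T Q : unbang T = Some Q ->
  exists L P, T = plugB L (BBang P) /\ Q = plugB L P.
Proof.
  revert Q; induction T as [| | |T1 IH1 T2 _| |]; intros Q H; simpl in H; try discriminate.
  - destruct (unbang T1) eqn:E; try discriminate. injection H as <-.
    destruct (IH1 _ eq_refl) as (L & P & -> & ->).
    exists (L ++ [T2]), P. rewrite !plugB_app; auto.
  - injection H as <-. exists [], T; auto.
Qed.

Lemma stepB_der_unbang T Q : unbang T = Some Q -> stepB (BDer T) Q.
Proof.
  intros H; apply unbang_Some_inv in H as (L & P & -> & ->).
  apply stepB_root, rootB_dbang.
Qed.

Lemma unbang_plug_subst_lift L j u c k T Q : unbang T = Some Q ->
  unbang (plugB L (substB j u (liftB c k T))) = Some (plugB L (substB j u (liftB c k Q))).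
Proof.
  intros E. rewrite unbang_plug. erewrite unbang_subst; [reflexivity|].
  rewrite unbang_lift, E; reflexivity.
Qed.

Lemma unbang_step_fwd T : forall Q T', unbang T = Some Q -> stepB T T' ->
  exists Q', unbang T' = Some Q' /\ stepB Q Q'.
Proof.
  induction T as [| | |T1 IH1 T2 _|T1 _|]; intros Q T' H HS; simpl in H; try discriminate.
  - destruct (unbang T1) as [Q1|] eqn:E; try discriminate. injection H as <-.
    apply stepB_es_inv in HS as [HS|[(X & HS & ->)|(Y & HS & ->)]].
    + apply rootB_es_inv in HS as (L & N & -> & ->).
      eexists; split; [apply unbang_plug_subst_lift, E|apply stepB_root, rootB_sbang].
    + destruct (IH1 _ _ eq_refl HS) as (Q' & HQ & HS').
      exists (BEs Q' T2); simpl; rewrite HQ; split; [|apply stepB_esl]; auto.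
    + exists (BEs Q1 Y); simpl; rewrite E; split; [|apply stepB_esr]; auto.
  - injection H as <-. apply stepB_bang_inv in HS as (X & HS & ->). exists X; auto.
Qed.

Lemma unbang_step_bwd T : forall Q Q', unbang T = Some Q -> stepB Q Q' ->
  exists T', stepB T T' /\ unbang T' = Some Q'.
Proof.
  induction T as [| | |T1 IH1 T2 _|T1 _|]; intros Q Q' H HS; simpl in H; try discriminate.
  - destruct (unbang T1) as [Q1|] eqn:E; try discriminate. injection H as <-.
    apply stepB_es_inv in HS as [HS|[(X & HS & ->)|(Y & HS & ->)]].
    + apply rootB_es_inv in HS as (L & N & -> & ->).
      eexists; split; [apply stepB_root, rootB_sbang|apply unbang_plug_subst_lift, E].
    + destruct (IH1 _ _ eq_refl HS) as (T' & HS' & HT).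
      exists (BEs T' T2); simpl; rewrite HT; split; [apply stepB_esl|]; auto.
    + exists (BEs T1 Y); simpl; rewrite E; split; [apply stepB_esr|]; auto.
  - injection H as <-. exists (BBang Q'); split; [apply stepB_bang|]; auto.
Qed.

Lemma unbang_steps_fwd T T' : stepsB T T' -> forall Q, unbang T = Some Q ->
  exists Q', unbang T' = Some Q' /\ stepsB Q Q'.
Proof.
  intros H; induction H as [T T' H| T | T1 T2 T3 _ IH12 _ IH23]; intros Q HQ.
  - destruct (unbang_step_fwd _ _ _ HQ H) as (Q' & ? & ?). exists Q'; split; [|apply rt_step]; auto.
  - exists Q; split; [|apply rt_refl]; auto.
  - destruct (IH12 _ HQ) as (Q2 & H2 & S12).
    destruct (IH23 _ H2) as (Q3 & H3 & S23).
    exists Q3; split; [|eapply rt_trans]; eauto.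
Qed.

Definition appV (T U : bterm) : bterm :=
  match unbang T with
  | Some Q => BApp Q U
  | None => BApp (BDer T) U
  end.

Lemma transV_app M N : transV (LApp M N) = appV (transV M) (transV N).
Proof. reflexivity. Qed.

Lemma stepsB_der_appV T U : stepsB (BApp (BDer T) U) (appV T U).
Proof.
  unfold appV; destruct (unbang T) eqn:E; [|apply rt_refl].
  apply rt_step, stepB_appl, stepB_der_unbang, E.
Qed.

Lemma stepsB_appV_l T T' U : stepsB T T' -> stepsB (appV T U) (appV T' U).
Proof.
  intros HT; unfold appV at 1; destruct (unbang T) as [Q|] eqn:E.
  - destruct (unbang_steps_fwd _ _ HT _ E) as (Q' & E' & HQ).
    unfold appV; rewrite E'.
    apply (stepsB_map (fun x => BApp x U)); auto using stepB_appl.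
  - eapply rt_trans; [|apply stepsB_der_appV].
    apply (stepsB_map (fun x => BApp (BDer x) U)); auto using stepB_appl, stepB_der.
Qed.

Lemma stepsB_appV_r T U U' : stepsB U U' -> stepsB (appV T U) (appV T U').
Proof.
  intros HU; unfold appV; destruct (unbang T);
    apply (stepsB_map (BApp _)); auto using stepB_appr.
Qed.

Lemma stepB_appV_inv T U N : stepB (appV T U) N ->
  rootB (appV T U) N
  \/ (exists T', stepB T T' /\ stepsB N (appV T' U))
  \/ (exists U', stepB U U' /\ N = appV T U').
Proof.
  unfold appV at 1; destruct (unbang T) as [Q|] eqn:E; intros H;
    apply stepB_app_inv in H as [H|[(X & H & ->)|(Y & H & ->)]].
  - left; unfold appV; rewrite E; exact H.
  - destruct (unbang_step_bwd _ _ _ E H) as (T' & HT & E').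
    right; left; exists T'; split; [exact HT|].
    unfold appV; rewrite E'; apply rt_refl.
  - right; right; exists Y; unfold appV; rewrite E; auto.
  - left; unfold appV; rewrite E; exact H.
  - apply stepB_der_inv in H as [H|(T' & H & ->)].
    + apply rootB_der_inv in H as (L & P & -> & _).
      rewrite unbang_plug in E; discriminate.
    + right; left; exists T'; split; [exact H|apply stepsB_der_appV].
  - right; right; exists Y; unfold appV; rewrite E; auto.
Qed.

Lemma transV_lift M : forall c k, transV (liftL c k M) = liftB c k (transV M).
Proof.
  induction M as [n|M IH|M1 IH1 M2 IH2|M1 IH1 M2 IH2]; intros c k; simpl.
  - destruct (n <? c); auto.
  - rewrite IH; auto.
  - rewrite IH1, IH2, unbang_lift. destruct (unbang (transV M1)); auto.
  - rewrite IH1, IH2; auto.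
Qed.

(* Variables of [transV M] only occur under a bang, so a substitution cannot
   create the shape L<!P>. *)
Lemma unbang_subst_transV M : forall j W,
  unbang (substB j W (transV M)) = option_map (substB j W) (unbang (transV M)).
Proof.
  induction M as [| |M1 _ M2 _|M1 IH1 M2 _]; intros j W; simpl; auto.
  - destruct (unbang (transV M1)); auto.
  - rewrite IH1. destruct (unbang (transV M1)); auto.
Qed.

Lemma transV_subst M : forall j V W, transV V = BBang W ->
  transV (substL j V M) = substB j W (transV M).
Proof.
  induction M as [n|M IH|M1 IH1 M2 IH2|M1 IH1 M2 IH2]; intros j V W HV; simpl.
  - destruct (n <? j); auto. destruct (n =? j); simpl; auto.
    rewrite transV_lift, HV; auto.
  - rewrite (IH _ _ _ HV); auto.
  - rewrite (IH1 _ _ _ HV), (IH2 _ _ _ HV), unbang_subst_transV.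
    destruct (unbang (transV M1)); auto.
  - rewrite (IH1 _ _ _ HV), (IH2 _ _ _ HV); auto.
Qed.

Lemma transV_plug L M : transV (plugL L M) = plugB (map transV L) (transV M).
Proof. revert M; induction L; simpl; auto. Qed.

Lemma transV_eq_plug_bang L : forall U W, transV U = plugB L (BBang W) ->
  exists L' V, U = plugL L' V /\ L = map transV L' /\ transV V = BBang W /\ is_value V.
Proof.
  induction L as [|x L IH] using rev_ind; intros U W H; simpl in H.
  - exists [], U. destruct U as [| |U1 U2|]; simpl in H |- *; try discriminate; auto.
    destruct (unbang (transV U1)); discriminate.
  - rewrite plugB_app in H. destruct U as [| |U1 U2|U1 U2]; simpl in H; try discriminate.
    + destruct (unbang (transV U1)); discriminate.
    + injection H as H <-. destruct (IH _ _ H) as (L' & V & -> & -> & HV & HVv).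
      exists (L' ++ [U2]), V. rewrite plugL_app, map_app; auto.
Qed.

Lemma transV_unbang_eq_plug_lam L : forall A M, unbang (transV A) = Some (plugB L (BLam M)) ->
  exists L' A0, A = plugL L' (LLam A0) /\ L = map transV L' /\ M = transV A0.
Proof.
  induction L as [|x L IH] using rev_ind; intros A M H; simpl in H.
  - destruct A as [| |A1 A2|A1 A2]; simpl in H; try discriminate.
    + injection H as <-. exists [], A; auto.
    + destruct (unbang (transV A1)); discriminate.
    + destruct (unbang (transV A1)); discriminate.
  - rewrite plugB_app in H. destruct A as [| |A1 A2|A1 A2]; simpl in H; try discriminate.
    + destruct (unbang (transV A1)); discriminate.
    + destruct (unbang (transV A1)) eqn:E; try discriminate.
      injection H as -> <-. destruct (IH _ _ E) as (L' & A0 & -> & -> & ->).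
      exists (L' ++ [A2]), A0. rewrite plugL_app, map_app; auto.
Qed.

Lemma transV_root_reflect M N : rootB (transV M) N ->
  exists P, rootV M P /\ N = transV P.
Proof.
  destruct M as [| |M1 M2|M1 M2]; simpl; intros H; try solve [inversion H].
  - destruct (unbang (transV M1)) as [Q|] eqn:E;
      apply rootB_app_inv in H as (L & M' & HL & ->).
    + subst Q. apply transV_unbang_eq_plug_lam in E as (L' & A0 & -> & -> & ->).
      exists (plugL L' (LEs A0 (liftL 0 (length L') M2))); split; [constructor|].
      rewrite transV_plug; simpl. rewrite transV_lift, length_map; auto.
    + destruct (plugB_nil_or_es L (BLam M')) as [->|(A & B & E')];
        [|rewrite E' in HL]; discriminate.
  - apply rootB_es_inv in H as (L & W & HL & ->).
    apply transV_eq_plug_bang in HL as (L' & V & -> & -> & HV & HVv).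
    exists (plugL L' (substL 0 V (liftL 1 (length L') M1))); split; [now constructor|].
    rewrite transV_plug, (transV_subst _ _ _ _ HV), transV_lift, length_map; auto.
Qed.

Lemma transV_step_sim M : forall N, stepB (transV M) N ->
  exists P, stepsV M P /\ stepsB N (transV P).
Proof.
  induction M as [n|M IH|M1 IH1 M2 IH2|M1 IH1 M2 IH2]; intros N H.
  - apply stepB_bang_inv in H as (X & H & _). now apply stepB_var_inv in H.
  - apply stepB_bang_inv in H as (X & H & ->). apply stepB_lam_inv in H as (Y & H & ->).
    destruct (IH _ H) as (P & HP & HS). exists (LLam P); split.
    + apply (stepsV_map LLam); [intros ? ? ?; apply ctxL_lam|]; auto.
    + apply (stepsB_map (fun x => BBang (BLam x))); auto using stepB_bang, stepB_lam.
  - apply stepB_appV_inv in H as [H|[(T & H & HN)|(U & H & ->)]].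
    + destruct (transV_root_reflect (LApp M1 M2) N H) as (P & HP & ->).
      exists P; split; [apply rt_step; now constructor|apply rt_refl].
    + destruct (IH1 _ H) as (P & HP & HS). exists (LApp P M2); split.
      * apply (stepsV_map (fun x => LApp x M2)); [intros ? ? ?; apply ctxL_appl|]; auto.
      * eapply rt_trans; [exact HN|]. rewrite transV_app. apply stepsB_appV_l, HS.
    + destruct (IH2 _ H) as (P & HP & HS). exists (LApp M1 P); split.
      * apply (stepsV_map (LApp M1)); [intros ? ? ?; apply ctxL_appr|]; auto.
      * rewrite transV_app. apply stepsB_appV_r, HS.
  - apply stepB_es_inv in H as [H|[(X & H & ->)|(Y & H & ->)]].
    + destruct (transV_root_reflect (LEs M1 M2) N H) as (P & HP & ->).
      exists P; split; [apply rt_step; now constructor|apply rt_refl].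
    + destruct (IH1 _ H) as (P & HP & HS). exists (LEs P M2); split.
      * apply (stepsV_map (fun x => LEs x M2)); [intros ? ? ?; apply ctxL_esl|]; auto.
      * apply (stepsB_map (fun x => BEs x (transV M2))); auto using stepB_esl.
    + destruct (IH2 _ H) as (P & HP & HS). exists (LEs M1 P); split.
      * apply (stepsV_map (LEs M1)); [intros ? ? ?; apply ctxL_esr|]; auto.
      * apply (stepsB_map (BEs (transV M1))); auto using stepB_esr.
Qed.

Theorem mainTheorem7 :
  (forall (M : lterm) (N : bterm), stepB (transN M) N ->
     exists P : lterm, stepsN M P /\ stepsB N (transN P)) /\
  (forall (M : lterm) (N : bterm), stepB (transV M) N ->
     exists P : lterm, stepsV M P /\ stepsB N (transV P)).
Proof.
  split.
  - intros M N H. destruct (transN_step_reflect M N H) as (P & HP & ->).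
    exists P; split; [apply rt_step, HP|apply rt_refl].
  - exact transV_step_sim.
Qed.
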